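(* In the construction below, if there exists a connected subgraph $H$ of $G'$ with $S\subseteq V(H)$ and $|E(H)|\le 2k$ (an admissible solution of the Steiner Tree instance), then there exists an admissible solution $E^*$ of the constructed CSCN instance.
   Context: Let $G'=(V',E')$ be a connected undirected graph, let $S=\{u_1,\dots,u_s\}\subseteq V'$ with $s=|S|$, and let $k\ge 0$ be a real number such that $2k$ is an integer and $|E'|\ge 2k$. (Viewing every edge of $G'$ as having weight $\frac12$, the Steiner Tree instance asks for a connected subgraph $H$ of $G'$ with $S\subseteq V(H)$ and total edge weight at most $k$, i.e. $|E(H)|\le 2k$.) Let $t\ge 1$ be an integer. Let $V = V'\cup\{v_{i,j} : 1\le i\le s,\ 1\le j\le t\}$ (the $v_{i,j}$ are new vertices) and let $E$ be the set of all pairs of vertices of $V$ (edges undirected). Define $w^*:E\to\mathbb{R}$ by: $w^*(\{v_{i,j},u_i\})=1$ for all $i,j$; $w^*(\{v_{i,j},u\})=0$ for every $u\in V\setminus\{u_i\}$; $w^*(e)=\frac12$ for every $e\in E'$; $w^*(\{u,u'\})=0$ for $u,u'\in V'$ with $\{u,u'\}\notin E'$. Set $A=\frac{st+k}{st+2k}$ and $B=\frac{\frac12(|E'|-2k)}{st+2k}$. For nonempty $E^*\subseteq E$ let $\alpha(E^* )=\frac{\sum_{e\in E^*}w^*(e)}{|E^*|}$ and $\beta(E^* )=\frac{\sum_{e\in E\setminus E^*}w^*(e)}{|E^*|}$. The graph induced by $E^*$ has vertex set the vertices incident to some edge of $E^*$ and edge set $E^*$. An admissible solution of the constructed CSCN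 instance is a nonempty $E^*\subseteq E$ whose induced graph is connected and which satisfies $\alpha(E^* )\ge A$ and $\beta(E^* )\le B$. *)

From mathcomp Require Import all_boot all_order all_algebra.
Set Implicit Arguments. Unset Strict Implicit. Unset Printing Implicit Defensive.
Import Order.TTheory GRing.Theory Num.Theory.
Local Open Scope ring_scope.

(* A graph on a finite vertex type T is given by its edge set: a set of
   2-element subsets of T. *)
Definition is_edge_set (T : finType) (E : {set {set T}}) : bool :=
  [forall e in E, #|e| == 2]%N.

Definition adj (T : finType) (E : {set {set T}}) : rel T :=
  fun x y => [set x; y] \in E.

Definition incident (T : finType) (E : {set {set T}}) : {set T} :=
  \bigcup_(e in E) e.

Definition connected_on (T : finType) (W : {set T}) (E : {set {set T}}) : Prop :=
  forall x y, x \in W -> y \in W -> connect (adj E) x y.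

Definition induced_connected (T : finType) (E : {set {set T}}) : Prop :=
  connected_on (incident E) E.

Definition steiner_solution (T : finType) (E' : {set {set T}}) (S : {set T})
    (VH : {set T}) (EH : {set {set T}}) : Prop :=
  [/\ EH \subset E', (forall e, e \in EH -> e \subset VH),
      S \subset VH & connected_on VH EH].

(* Vertex set of the constructed instance: V' + {v_{i,j}} with
   inr (i, j) standing for v_{i+1, j+1}. *)
Definition CV (T : finType) (s t : nat) : finType := (T + ('I_s * 'I_t))%type.

Definition CE (T : finType) (s t : nat) : {set {set CV T s t}} :=
  [set e : {set CV T s t} | #|e| == 2]%N.

(* the weight w^* of an edge e of E; u i is the terminal u_{i+1} *)
Definition wstar (R : realFieldType) (T : finType) (s t : nat)
    (E' : {set {set T}}) (u : 'I_s -> T) (e : {set CV T s t}) : R :=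
  if [exists ij : 'I_s * 'I_t, (inr ij \in e) && (inl (u ij.1) \in e)] then 1
  else if [exists ij : 'I_s * 'I_t, inr ij \in e] then 0
  else if [set x | inl x \in e] \in E' then 1 / 2 else 0.

Definition alpha (R : realFieldType) (T : finType) (s t : nat)
    (E' : {set {set T}}) (u : 'I_s -> T) (Es : {set {set CV T s t}}) : R :=
  (\sum_(e in Es) wstar R E' u e) / (#|Es|%:R).

Definition beta (R : realFieldType) (T : finType) (s t : nat)
    (E' : {set {set T}}) (u : 'I_s -> T) (Es : {set {set CV T s t}}) : R :=
  (\sum_(e in CE T s t :\: Es) wstar R E' u e) / (#|Es|%:R).

(* k = k2 / 2 *)
Definition Aval (R : realFieldType) (s t k2 : nat) : R :=
  ((s * t)%:R + k2%:R / 2) / ((s * t)%:R + k2%:R).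

Definition Bval (R : realFieldType) (s t k2 nE : nat) : R :=
  (1 / 2 * (nE%:R - k2%:R)) / ((s * t)%:R + k2%:R).

Definition cscn_admissible (R : realFieldType) (T : finType) (s t k2 : nat)
    (E' : {set {set T}}) (u : 'I_s -> T) (Es : {set {set CV T s t}}) : Prop :=
  [/\ Es \subset CE T s t, Es != set0, induced_connected Es,
      Aval R s t k2 <= alpha R E' u Es
    & beta R E' u Es <= Bval R s t k2 #|E'|].

From mathcomp Require Import all_boot all_order all_algebra.
Import Order.TTheory GRing.Theory Num.Theory.
Local Open Scope ring_scope.

(* Since G' is connected, a connected subgraph H with fewer than |E'| edges always has an
   edge of G' outside H with an endpoint in H; adding such edges one at a time turns the
   Steiner tree into a connected subgraph H' with exactly 2k edges still containing S.
   Take E* to be the edges of H' together with all pendant edges {v_{i,j}, u_i}. It is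
   connected, has st + 2k edges and weight st + k, while the edges outside it weigh
   (|E'| - 2k)/2 in total, coming from the edges of G' not in H'. So alpha and beta of E*
   equal A and B exactly. *)

Lemma path_exit_edge (T : Type) (e : rel T) (P : pred T) x p :
  P x -> ~~ P (last x p) -> path e x p -> exists y z, [/\ P y, ~~ P z & e y z].
Proof.
elim: p x => [|y p IHp] x /= Px; first by rewrite Px.
move=> nPlast /andP[exy py]; case Py: (P y); first exact: IHp Py nPlast py.
by exists x, y; rewrite Py.
Qed.

Section EdgeSets.
Set Implicit Arguments. Unset Strict Implicit.
Variable T : finType.
Implicit Types (E F : {set {set T}}) (W : {set T}).

Lemma connect_adj_subset E F : E \subset F -> subrel (connect (adj E)) (connect (adj F)).
Proof. by move=> EF; apply: connect_sub => x y Exy; apply/connect1/(subsetP EF). Qed.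

Lemma connected_on_add_edge W E x y :
  connected_on W E -> x \in W -> connected_on (y |: W) ([set x; y] |: E).
Proof.
move=> conW xW; set F := _ |: E.
have EF : subrel (connect (adj E)) (connect (adj F)) by apply/connect_adj_subset/subsetUr.
have Fxy : adj F x y by rewrite /adj setU11.
have Fyx : adj F y x by rewrite /adj setUC setU11.
move=> a b; rewrite !in_setU1 => /predU1P[-> | aW] /predU1P[-> | bW].
- exact: connect0.
- exact: connect_trans (connect1 Fyx) (EF _ _ (conW _ _ xW bW)).
- exact: connect_trans (EF _ _ (conW _ _ aW xW)) (connect1 Fxy).
- exact: EF _ _ (conW _ _ aW bW).
Qed.

Variable E' : {set {set T}}.
Hypotheses (edgesE' : is_edge_set E') (connE' : connected_on [set: T] E').

Lemma exists_exit_edge W E w :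
  E \subset E' -> (forall e, e \in E -> e \subset W) -> w \in W -> (#|E| < #|E'|)%N ->
  exists x y, [/\ x \in W, [set x; y] \in E' & [set x; y] \notin E].
Proof.
move=> EE' EW wW ltEE'.
have [e /setDP[eE' eNE]] : exists e, e \in E' :\: E.
  apply/set0Pn; rewrite setD_eq0; apply: contraTN ltEE' => /subset_leq_card.
  by rewrite leqNgt.
have /cards2P[a [b [_ eab]]] : #|e| == 2%N by move: (forallP edgesE' e) => /implyP; apply.
have [aW | aNW] := boolP (a \in W); first by exists a, b; rewrite -eab.
have /connectP[p pathp lastp] := connE' (in_setT w) (in_setT a).
have [x [y [xW yNW Exy]]] : exists x y, [/\ x \in W, y \notin W & adj E' x y].
  by apply: (@path_exit_edge _ _ (mem W) w p); rewrite // -lastp.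
exists x, y; split=> //; apply: contra yNW => /EW /subsetP; apply; exact: set22.
Qed.

Variable S : {set T}.
Hypothesis S_neq0 : S != set0.

Lemma steiner_solution_add_edge W E :
  steiner_solution E' S W E -> (#|E| < #|E'|)%N ->
  exists W' E2, steiner_solution E' S W' E2 /\ #|E2| = #|E|.+1.
Proof.
case=> EE' EW SW conW ltEE'.
have [w wS] := set0Pn _ S_neq0.
have [x [y [xW xyE' xyNE]]] := exists_exit_edge EE' EW (subsetP SW w wS) ltEE'.
exists (y |: W), ([set x; y] |: E); split; last by rewrite cardsU1 xyNE.
split.
- by rewrite subUset sub1set xyE'.
- move=> e /setU1P[-> | /EW eW]; last exact: subset_trans eW (subsetUr _ _).
  by apply/subsetP => z /set2P[-> | ->]; rewrite !inE ?xW ?eqxx ?orbT.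
- exact: subset_trans SW (subsetUr _ _).
- exact: connected_on_add_edge.
Qed.

Lemma steiner_solution_grow W E n :
  steiner_solution E' S W E -> (#|E| <= n <= #|E'|)%N ->
  exists W' E2, steiner_solution E' S W' E2 /\ #|E2| = n.
Proof.
move=> solE /andP[leEn lenE']; rewrite -(subnKC leEn) in lenE' *.
elim: (n - #|E|)%N lenE' => [|m IHm] lemE'; first by exists W, E; rewrite addn0.
rewrite addnS in lemE' *.
have [W' [E2 [solE2 cardE2]]] := IHm (ltnW lemE').
rewrite -cardE2 in lemE' *; exact: steiner_solution_add_edge solE2 lemE'.
Qed.

End EdgeSets.

Lemma card2_eq_set2 (T : finType) (e : {set T}) a b :
  #|e| = 2%N -> a \in e -> b \in e -> a != b -> e = [set a; b].
Proof.
move=> e2 ae be ab; apply/esym/eqP; rewrite eqEcard cards2 ab e2 leqnn andbT.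
by apply/subsetP => z /set2P[-> | ->].
Qed.

Lemma sumr_mem_card (R : numDomainType) (I : finType) (X Y : {set I}) :
  \sum_(i in X) ((i \in Y)%:R : R) = #|X :&: Y|%:R.
Proof.
rewrite (big_setID Y) /= [X in _ + X]big1 ?addr0; last by move=> i /setDP[_ /negbTE->].
by rewrite (eq_bigr (fun=> 1)) => [|i /setIP[_ ->]]; rewrite ?sumr_const.
Qed.

Section Construction.
Set Implicit Arguments. Unset Strict Implicit.
Variables (R : realFieldType) (T : finType) (E' : {set {set T}}) (s t : nat).
Variable u : 'I_s -> T.
Hypothesis edgesE' : is_edge_set E'.
Local Notation V := (CV T s t).
Implicit Types (f W : {set T}) (F : {set {set T}}) (e : {set V}).

Definition lift_edge (f : {set T}) : {set V} := inl @: f.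

Definition pendant_edges : {set {set V}} :=
  [set [set inr ij; inl (u ij.1)] | ij : 'I_s * 'I_t].

Definition cscn_solution (F : {set {set T}}) : {set {set V}} :=
  lift_edge @: F :|: pendant_edges.

Lemma mem_lift_edge f x : (inl x \in lift_edge f) = (x \in f).
Proof. exact/mem_imset/inl_inj. Qed.

Lemma inr_in_lift_edge f ij : (inr ij \in lift_edge f) = false.
Proof. by apply/imsetP => -[]. Qed.

Lemma lift_edge_inj : injective lift_edge.
Proof. exact/imset_inj/inl_inj. Qed.

Lemma card_lift_edge f : #|lift_edge f| = #|f|.
Proof. exact/card_imset/inl_inj. Qed.

Lemma lift_edge_set2 x y : lift_edge [set x; y] = [set inl x; inl y].
Proof. by rewrite /lift_edge imsetU1 imset_set1. Qed.

Lemma lift_edge_preimage e :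
  (forall ij, inr ij \notin e) -> e = lift_edge [set x | inl x \in e].
Proof.
move=> eNinr; apply/setP => -[x | ij]; first by rewrite mem_lift_edge inE.
by rewrite (negbTE (eNinr ij)) inr_in_lift_edge.
Qed.

Lemma inr_edge_notin_lift_edges F e ij : inr ij \in e -> e \notin lift_edge @: F.
Proof. by move=> ije; apply/imsetP => -[f _ ef]; rewrite ef inr_in_lift_edge in ije. Qed.

Lemma mem_pendant_edges e : #|e| = 2%N ->
  (e \in pendant_edges) = [exists ij, (inr ij \in e) && (inl (u ij.1) \in e)].
Proof.
move=> e2; apply/imsetP/existsP => [[ij _ ->] | [ij /andP[ije uije]]].
  by exists ij; rewrite set21 set22.
by exists ij => //; apply: card2_eq_set2.
Qed.

Lemma pendant_notin_lift_edges F e : e \in pendant_edges -> e \notin lift_edge @: F.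
Proof. by case/imsetP => ij _ ->; apply/inr_edge_notin_lift_edges/set21. Qed.

Lemma pendant_edge_inj :
  injective (fun ij : 'I_s * 'I_t => [set inr ij; inl (u ij.1)] : {set V}).
Proof. by move=> ij kl /setP/(_ (inr ij)); rewrite set21 => /esym/set2P[[] | ]. Qed.

Lemma card_pendant_edges : #|pendant_edges| = (s * t)%N.
Proof. by rewrite card_imset ?card_prod ?card_ord //; apply: pendant_edge_inj. Qed.

Lemma card_lift_edges F : #|lift_edge @: F| = #|F|.
Proof. exact/card_imset/lift_edge_inj. Qed.

Lemma wstar_edge e : #|e| = 2%N ->
  wstar R E' u e = (e \in pendant_edges)%:R + (e \in lift_edge @: E')%:R / 2.
Proof.
move=> e2; rewrite /wstar -mem_pendant_edges //.
case: ifPn => [pe | _].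
  by rewrite (negbTE (pendant_notin_lift_edges _ pe)) mul0r addr0.
rewrite add0r; case: ifPn => [/existsP[ij] | /existsPn eNinr].
  by move/inr_edge_notin_lift_edges/negbTE->; rewrite mul0r.
rewrite [in RHS](lift_edge_preimage eNinr) (mem_imset _ _ lift_edge_inj).
by case: ifP; rewrite ?mul1r ?mul0r.
Qed.

Lemma lift_edges_subset_CE : lift_edge @: E' \subset CE T s t.
Proof.
apply/subsetP => _ /imsetP[f fE' ->]; rewrite inE card_lift_edge.
exact: implyP (forallP edgesE' f) fE'.
Qed.

Lemma pendant_subset_CE : pendant_edges \subset CE T s t.
Proof. by apply/subsetP => _ /imsetP[ij _ ->]; rewrite inE cards2. Qed.

Lemma pendant_lift_edges_disjoint F : pendant_edges :&: lift_edge @: F = set0.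
Proof.
apply/setP => e; rewrite inE in_set0.
by have [/(pendant_notin_lift_edges F)/negbTE-> |] := boolP (e \in pendant_edges).
Qed.

Lemma sum_wstar (X : {set {set V}}) : X \subset CE T s t ->
  \sum_(e in X) wstar R E' u e =
    #|X :&: pendant_edges|%:R + #|X :&: lift_edge @: E'|%:R / 2.
Proof.
move=> XCE; rewrite -!sumr_mem_card mulr_suml -big_split /=.
by apply: eq_bigr => e /(subsetP XCE); rewrite inE => /eqP/wstar_edge.
Qed.

Lemma connect_lift F a b :
  connect (adj F) a b -> connect (adj (lift_edge @: F)) (inl a) (inl b).
Proof.
case/connectP => p + ->; elim: p a => [|c p IHp] a /=.
  by move=> _; apply: connect0.
case/andP => Fac /IHp; apply: connect_trans; apply: connect1.
by rewrite /adj -lift_edge_set2 (mem_imset _ _ lift_edge_inj).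
Qed.

Lemma cscn_solution_connected W F :
  (forall f, f \in F -> f \subset W) -> (forall i, u i \in W) ->
  connected_on W F -> induced_connected (cscn_solution F).
Proof.
move=> FW uW conW; set Es := cscn_solution F.
have liftW a b : a \in W -> b \in W -> connect (adj Es) (inl a) (inl b).
  by move=> aW bW; apply/(connect_adj_subset (subsetUl _ _))/connect_lift/conW.
have anchor z : z \in incident Es -> exists2 w, w \in W & connect (adj Es) z (inl w).
  case/bigcupP => e /setUP[/imsetP[f fF ->] | /imsetP[ij _ ->]].
    by case/imsetP => x xf ->; exists x; [exact: subsetP (FW f fF) x xf | exact: connect0].
  case/set2P => ->; exists (u ij.1); rewrite ?uW ?connect0 //.
  by apply/connect1/setUP; right; apply: imset_f.
have symEs : connect_sym (adj Es) by apply: sym_connect_sym => a b; rewrite /adj setUC.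
move=> x y /anchor[a aW xa] /anchor[b bW yb].
by apply: connect_trans xa (connect_trans (liftW a b aW bW) _); rewrite symEs.
Qed.

Section Solution.
Variable F : {set {set T}}.
Hypothesis FE' : F \subset E'.

Let liftFE' : lift_edge @: F \subset lift_edge @: E'. Proof. exact: imsetS. Qed.

Lemma cscn_solution_subset_CE : cscn_solution F \subset CE T s t.
Proof. by rewrite subUset pendant_subset_CE (subset_trans liftFE' lift_edges_subset_CE). Qed.

Lemma card_cscn_solution : #|cscn_solution F| = (#|F| + s * t)%N.
Proof.
rewrite cardsU setIC pendant_lift_edges_disjoint cards0 subn0.
by rewrite card_lift_edges card_pendant_edges.
Qed.

Lemma sum_wstar_cscn_solution :
  \sum_(e in cscn_solution F) wstar R E' u e = (s * t)%:R + #|F|%:R / 2.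
Proof.
rewrite sum_wstar ?cscn_solution_subset_CE //.
have -> : cscn_solution F :&: pendant_edges = pendant_edges by apply/setIidPr/subsetUr.
have -> : cscn_solution F :&: lift_edge @: E' = lift_edge @: F.
  by rewrite setIUl (setIidPl liftFE') pendant_lift_edges_disjoint setU0.
by rewrite card_pendant_edges card_lift_edges.
Qed.

Lemma sum_wstar_outside_cscn_solution :
  \sum_(e in CE T s t :\: cscn_solution F) wstar R E' u e = (#|E'| - #|F|)%:R / 2.
Proof.
rewrite sum_wstar ?subsetDl //.
have -> : (CE T s t :\: cscn_solution F) :&: pendant_edges = set0.
  apply/setP => e; rewrite in_setI in_setD in_set0.
  by have [/(subsetP (subsetUr _ _))-> | _] := boolP (e \in pendant_edges); rewrite ?andbF.
have -> : (CE T s t :\: cscn_solution F) :&: lift_edge @: E' =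
          lift_edge @: E' :\: lift_edge @: F.
  apply/setP => e; rewrite in_setI !in_setD in_setU.
  case eE': (e \in lift_edge @: E'); rewrite ?andbF //.
  rewrite (subsetP lift_edges_subset_CE _ eE') !andbT.
  have eNpendant : e \notin pendant_edges.
    by apply: contraTN eE'; apply: pendant_notin_lift_edges.
  by rewrite (negbTE eNpendant) orbF.
by rewrite cardsD (setIidPr liftFE') !card_lift_edges cards0 add0r.
Qed.

End Solution.

Lemma cscn_solution_admissible k2 W F :
  (0 < s)%N -> (0 < t)%N -> steiner_solution E' [set u i | i : 'I_s] W F ->
  #|F| = k2 -> cscn_admissible R k2 E' u (cscn_solution F).
Proof.
move=> s_gt0 t_gt0 [FE' FW uW conW] cardF.
have le_k2E' : (k2 <= #|E'|)%N by rewrite -cardF subset_leq_card.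
split; first exact: cscn_solution_subset_CE.
- apply/set0Pn; exists [set inr (Ordinal s_gt0, Ordinal t_gt0); inl (u (Ordinal s_gt0))].
  by apply/setUP; right; apply: imset_f.
- by apply: cscn_solution_connected FW _ conW => i; apply/(subsetP uW)/imset_f.
- rewrite /alpha /Aval sum_wstar_cscn_solution // card_cscn_solution cardF.
  by rewrite natrD [k2%:R + _]addrC.
- rewrite /beta /Bval sum_wstar_outside_cscn_solution // card_cscn_solution cardF.
  by rewrite natrB // natrD [k2%:R + _]addrC mul1r [_^-1 * _]mulrC.
Qed.

End Construction.

Theorem lemma3 (R : realFieldType) (T : finType) (E' : {set {set T}})
    (s t k2 : nat) (u : 'I_s -> T) :
  is_edge_set E' ->
  connected_on [set: T] E' ->
  injective u ->
  (0 < s)%N ->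
  (1 <= t)%N ->
  (k2 <= #|E'|)%N ->
  (exists (VH : {set T}) (EH : {set {set T}}),
      steiner_solution E' [set u i | i : 'I_s] VH EH /\ (#|EH| <= k2)%N) ->
  exists Es : {set {set CV T s t}}, cscn_admissible R k2 E' u Es.
Proof.
move=> edgesE' connE' _ s_gt0 t_gt0 le_k2E' [VH [EH [solH le_EHk2]]].
have S_neq0 : [set u i | i : 'I_s] != set0.
  by apply/set0Pn; exists (u (Ordinal s_gt0)); apply: imset_f.
have [W [F [solF cardF]]] :
    exists W F, steiner_solution E' [set u i | i : 'I_s] W F /\ #|F| = k2.
  by apply: steiner_solution_grow solH _; rewrite ?le_EHk2.
exists (cscn_solution t u F).
exact (cscn_solution_admissible R edgesE' s_gt0 t_gt0 solF cardF).
Qed.
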